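(* Let $n$ be a power of two and let $\mathbf{X}=\sum_{j=1}^{n} x_j\,|j-1\rangle\langle j-1|$ be a real diagonal $n\times n$ matrix with $\|\mathbf{X}\|<1$. Suppose we are given a unitary (exact) block encoding of $\mathbf{X}$ implemented by a quantum circuit of depth $\mathcal{O}(\log n)$. Then for any two integers $1\le j,k\le n$ there exists a quantum circuit of depth $\mathcal{O}(\log n)$, which uses the given block encoding of $\mathbf{X}$ at most two times and uses $\log(n)+3$ ancilla qubits, that is a block encoding of the $n\times n$ matrix $x_j\,|k-1\rangle\langle k-1|$, i.e. the diagonal matrix whose only nonzero entry is $x_j$, located at the $k$-th diagonal position.
   Context: Block encoding: for a matrix $A$ of size $N\times N$ with operator norm $\|A\|<1$, a unitary $U$ acting on an ancilla register together with an $N$-dimensional system is an exact block encoding of $A$ if $U=|\mathbf{0}\rangle\langle\mathbf{0}|\otimes A+\cdots$, i.e. $A$ is the top-left block of $U$ with respect to the ancilla state $|\mathbf{0}\rangle$ (equivalently $(\langle\mathbf{0}|\otimes I)U(|\mathbf{0}\rangle\otimes I)=A$). It is an $\epsilon$-approximated block encoding of $A$ if $(\langle\mathbf{0}|\otimes I)U(|\mathbf{0}\rangle\otimes I)=\tilde A$ with $\|\tilde A-A\|\le\epsilon$. The states $|j\rangle$, $j=0,\dots,n-1$, are computational basis states of $\log n$ qubits. *)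

From HB Require Import structures.
From mathcomp Require Import all_boot all_order all_algebra.
Set Implicit Arguments. Unset Strict Implicit. Unset Printing Implicit Defensive.
Import Order.TTheory GRing.Theory Num.Theory.
Local Open Scope ring_scope.

Section QC.
Variable C : numClosedFieldType.

Definition dagger (n : nat) (M : 'M[C]_n) : 'M[C]_n := (map_mx Num.conj M)^T.
Definition unitary (n : nat) (M : 'M[C]_n) : bool := M *m dagger M == 1%:M.

(* i-th bit (qubit i) of a computational basis index; qubit 0 = least significant *)
Definition bitn (i b : nat) : bool := odd (b %/ 2 ^ i).

(* The operator on w qubits acting as V (a 2^k x 2^k matrix) on the qubits
   p 0, ..., p (k-1) (qubit l of V is placed on wire p l) and as the identity
   on the remaining wires. *)
Definition embed (w k : nat) (p : 'I_k -> 'I_w) (V : 'M[C]_(2 ^ k)) : 'M[C]_(2 ^ w) :=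
  \matrix_(r, t)
    (if [forall i : 'I_w, (i \notin codom p) ==> (bitn i r == bitn i t)]
     then \sum_(x : 'I_(2 ^ k) | [forall l : 'I_k, bitn l x == bitn (p l) r])
          \sum_(y : 'I_(2 ^ k) | [forall l : 'I_k, bitn l y == bitn (p l) t]) V x y
     else 0).

Record gate (w : nat) := Gate { gk : nat; gp : 'I_gk -> 'I_w; gV : 'M[C]_(2 ^ gk) }.

Definition gate_wires w (g : gate w) : seq 'I_w := [seq @gp w g i | i <- enum 'I_(gk g)].
Definition gate_ok w (g : gate w) : bool := (@gk w g <= 2)%N && unitary (@gV w g).
Definition gate_mx w (g : gate w) : 'M[C]_(2 ^ w) := embed (@gp w g) (@gV w g).

Definition layer (w : nat) := seq (gate w).
Definition layer_ok w (l : layer w) : bool :=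
  all (@gate_ok w) l && uniq (flatten (map (@gate_wires w) l)).
Definition layer_mx w (l : layer w) : 'M[C]_(2 ^ w) :=
  foldr (fun g M => gate_mx g *m M) 1%:M l.

(* A quantum circuit = sequence of layers, applied first to last; depth = number of layers. *)
Definition circuit (w : nat) := seq (layer w).
Definition circuit_ok w (c : circuit w) : bool := all (@layer_ok w) c.
Definition circuit_mx w (c : circuit w) : 'M[C]_(2 ^ w) :=
  foldl (fun M l => layer_mx l *m M) 1%:M c.
Definition depth w (c : circuit w) : nat := size c.

(* Oracle circuits on w wires that may call a given m-qubit unitary U (or its
   inverse U^dagger, when the flag is true) on the wires given by an injective map. *)
Inductive ostep (w m : nat) :=
  | OLayer of layer w
  | OCall of ('I_m -> 'I_w) & bool.
Definition ocircuit (w m : nat) := seq (ostep w m).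

Definition ostep_ok w m (st : ostep w m) : bool :=
  match st with OLayer l => layer_ok l | OCall p _ => injectiveb p end.
Definition ocircuit_ok w m (q : ocircuit w m) : bool := all (@ostep_ok w m) q.
Definition ncalls w m (q : ocircuit w m) : nat :=
  count (fun st => if st is OCall _ _ then true else false) q.

Definition ostep_mx w m (U : 'M[C]_(2 ^ m)) (st : ostep w m) : 'M[C]_(2 ^ w) :=
  match st with
  | OLayer l => layer_mx l
  | OCall p dag => embed p (if dag then dagger U else U)
  end.
Definition ocircuit_mx w m (U : 'M[C]_(2 ^ m)) (q : ocircuit w m) : 'M[C]_(2 ^ w) :=
  foldl (fun M st => ostep_mx U st *m M) 1%:M q.

(* depth of the circuit obtained by substituting, for each call, a circuit of
   depth dU implementing U (its inverse is the reversed adjoint circuit, same depth) *)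
Definition odepth w m (dU : nat) (q : ocircuit w m) : nat :=
  \sum_(st <- q) (if st is OCall _ _ then dU else 1%N).

(* Block encoding: with s system qubits (the low-order wires 0..s-1) and a
   ancilla qubits (wires s..s+a-1), U is an exact block encoding of A iff U is
   unitary and (<0|_anc (x) I) U (|0>_anc (x) I) = A. The basis index of
   |anc>|sys> is anc * 2^s + sys, so ancilla |0...0> corresponds to indices < 2^s. *)
Lemma exp2_le (s a : nat) : (2 ^ s <= 2 ^ (a + s))%N.
Proof. by rewrite leq_exp2l // leq_addl. Qed.

Definition block_encoding (s a : nat) (U : 'M[C]_(2 ^ (a + s))) (A : 'M[C]_(2 ^ s)) : Prop :=
  unitary U /\
  forall i j : 'I_(2 ^ s), U (widen_ord (exp2_le s a) i) (widen_ord (exp2_le s a) j) = A i j.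

(* the real diagonal matrix X = sum_j x_j |j-1><j-1| (0-based indices here) *)
Definition diagX (n : nat) (x : 'I_n -> C) : 'M[C]_n := diag_mx (\row_i x i).

End QC.

From HB Require Import structures.
From mathcomp Require Import all_boot all_order all_algebra.
From mathcomp Require Import zify fingroup perm.
Import Order.TTheory GRing.Theory Num.Theory.
Set Implicit Arguments. Unset Strict Implicit. Unset Printing Implicit Defensive.

(* The construction needs a single call to the encoding U of X on a copy R of the
   system register.  CX gates first write |j> into R, so that U, read on the ancilla-zero
   block, selects column j of X.  Afterwards, controlled on the system qubits r_i, R is
   xored with j (+) k (+) r.  In the ancilla-zero block the resulting entry <r|Q|t> is
   [r = t] * X_{j (+) k (+) r, j} = x_j [r = k] [t = k], since X is diagonal; the
   depth is 2 log n + depth U. *)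

Lemma bitn0 r : bitn 0 r = odd r.
Proof. by rewrite /bitn expn0 divn1. Qed.

Lemma bitnS i r : bitn i.+1 r = bitn i r./2.
Proof. by rewrite /bitn expnS divnMA divn2. Qed.

Lemma bitn_small w r i : r < 2 ^ w -> w <= i -> bitn i r = false.
Proof.
move=> hr hi; rewrite /bitn divn_small //.
by apply: (leq_trans hr); rewrite leq_exp2l.
Qed.

Lemma bitn_inj w r t : r < 2 ^ w -> t < 2 ^ w ->
  (forall i, i < w -> bitn i r = bitn i t) -> r = t.
Proof.
elim: w r t => [|w IH] r t hr ht eq_bits.
  by rewrite expn0 in hr ht; lia.
rewrite -(odd_double_half r) -(odd_double_half t) -!bitn0 eq_bits //.
congr (_ + _.*2); apply: IH => [||i hi]; last by rewrite -!bitnS eq_bits.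
  by rewrite -divn2 ltn_divLR // mulnC -expnS.
by rewrite -divn2 ltn_divLR // mulnC -expnS.
Qed.

Lemma ord_bitn_inj w (r t : 'I_(2 ^ w)) :
  (forall i, i < w -> bitn i r = bitn i t) -> r = t.
Proof. by move=> eq_bits; apply/val_inj/(bitn_inj (ltn_ord r) (ltn_ord t)). Qed.

Fixpoint nat_of_bits (b : nat -> bool) w : nat :=
  if w is w'.+1 then b 0 + (nat_of_bits (fun i => b i.+1) w').*2 else 0.

Lemma nat_of_bits_lt b w : nat_of_bits b w < 2 ^ w.
Proof.
elim: w b => [|w IH] b //=.
have := IH (fun i => b i.+1); rewrite expnS -muln2; case: (b 0) => /=; lia.
Qed.

Lemma bitn_nat_of_bits b w i : i < w -> bitn i (nat_of_bits b w) = b i.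
Proof.
elim: w b i => [|w IH] b [|i] //= hi.
  by rewrite bitn0 oddD odd_double addbF oddb.
by rewrite bitnS half_bit_double IH.
Qed.

Definition ord_of_bits w b : 'I_(2 ^ w) := Ordinal (nat_of_bits_lt b w).

Lemma bitn_ord_of_bits w b i : i < w -> bitn i (ord_of_bits w b) = b i.
Proof. exact: bitn_nat_of_bits. Qed.

Section WireRestriction.
Variables (w k : nat) (p : 'I_k -> 'I_w).

Definition agree_off (r t : 'I_(2 ^ w)) : bool :=
  [forall i : 'I_w, (i \notin codom p) ==> (bitn i r == bitn i t)].

Definition read_wires (r : 'I_(2 ^ w)) : 'I_(2 ^ k) :=
  ord_of_bits k (fun l => if insub l is Some o then bitn (p o) r else false).

Lemma bitn_read_wires (l : 'I_k) r : bitn l (read_wires r) = bitn (p l) r.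
Proof. by rewrite bitn_ord_of_bits // valK. Qed.

Lemma read_wiresP x r : (x == read_wires r) = [forall l : 'I_k, bitn l x == bitn (p l) r].
Proof.
apply/eqP/forallP => [-> l|eq_bits]; first by rewrite bitn_read_wires.
apply: ord_bitn_inj => i hi.
by rewrite (bitn_read_wires (Ordinal hi)); apply/eqP/(eq_bits (Ordinal hi)).
Qed.

Definition write_wires (r : 'I_(2 ^ w)) (x : 'I_(2 ^ k)) : 'I_(2 ^ w) :=
  ord_of_bits w (fun i => if insub i is Some o then
                            if [pick l | p l == o] is Some l then bitn l x else bitn i r
                          else false).

Lemma bitn_write_wires_off (i : 'I_w) r x :
  i \notin codom p -> bitn i (write_wires r x) = bitn i r.
Proof.
move=> hi; rewrite bitn_ord_of_bits // valK; case: pickP => // l /eqP hl.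
by rewrite -hl codom_f in hi.
Qed.

Lemma agree_off_refl r : agree_off r r.
Proof. by apply/forallP => i; apply/implyP. Qed.

Lemma agree_offC r t : agree_off r t = agree_off t r.
Proof.
by apply/forallP/forallP => H i; apply/implyP => hi; rewrite eq_sym (implyP (H i) hi).
Qed.

Lemma agree_off_trans r t u : agree_off r t -> agree_off t u -> agree_off r u.
Proof.
move=> /forallP H1 /forallP H2; apply/forallP => i; apply/implyP => hi.
by rewrite (eqP (implyP (H1 i) hi)) (implyP (H2 i) hi).
Qed.

Lemma agree_off_read_inj r t : agree_off r t -> read_wires r = read_wires t -> r = t.
Proof.
move=> /forallP agree_rt eq_read; apply: ord_bitn_inj => i hi.
case: (boolP (Ordinal hi \in codom p)) => [/codomP [l /(congr1 val) /= ->]| off].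
  by rewrite -!bitn_read_wires eq_read.
by apply/eqP; apply: (implyP (agree_rt (Ordinal hi)) off).
Qed.

Hypothesis p_inj : injective p.

Lemma bitn_write_wires (l : 'I_k) r x : bitn (p l) (write_wires r x) = bitn l x.
Proof.
rewrite bitn_ord_of_bits // valK.
by case: pickP => [l' /eqP/p_inj -> //|/(_ l)]; rewrite eqxx.
Qed.

Lemma write_wiresP r x u : (agree_off r u && (read_wires u == x)) = (u == write_wires r x).
Proof.
apply/andP/eqP => [[agree_ru /eqP <-]|->].
  apply: agree_off_read_inj; last first.
    by apply/eqP; rewrite read_wiresP; apply/forallP => l; rewrite bitn_write_wires.
  rewrite agree_offC; apply: agree_off_trans agree_ru.
  by apply/forallP => i; apply/implyP => hi; rewrite bitn_write_wires_off.
split; first by apply/forallP => i; apply/implyP => hi; rewrite bitn_write_wires_off.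
by rewrite eq_sym read_wiresP; apply/forallP => l; rewrite bitn_write_wires.
Qed.

Lemma sum_agree_off (R : nmodType) r (G : 'I_(2 ^ k) -> R) :
  (\sum_(u : 'I_(2 ^ w)) (if agree_off r u then G (read_wires u) else 0) = \sum_x G x)%R.
Proof.
transitivity (\sum_(u : 'I_(2 ^ w)) \sum_(x : 'I_(2 ^ k))
                 (if agree_off r u && (read_wires u == x) then G x else 0))%R.
  apply: eq_bigr => u _; case: ifP => _ /=; last by rewrite big1.
  by rewrite -big_mkcond (big_pred1 (read_wires u)) // => x; rewrite /= eq_sym.
rewrite exchange_big /=; apply: eq_bigr => x _.
by under eq_bigr => u _ do rewrite write_wiresP; rewrite -big_mkcond big_pred1_eq.
Qed.

End WireRestriction.

Local Open Scope ring_scope.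

Section Unitary.
Variable C : numClosedFieldType.

Lemma daggerE n (M : 'M[C]_n) i j : dagger M i j = (M j i)^*.
Proof. by rewrite !mxE. Qed.

Lemma dagger_mul n (A B : 'M[C]_n) : dagger (A *m B) = dagger B *m dagger A.
Proof. by rewrite /dagger map_mxM trmx_mul. Qed.

Lemma unitary1 n : unitary (1%:M : 'M[C]_n).
Proof. by rewrite /unitary /dagger map_mx1 trmx1 mulmx1. Qed.

Lemma unitary_mul n (A B : 'M[C]_n) : unitary A -> unitary B -> unitary (A *m B).
Proof.
rewrite /unitary => /eqP hA /eqP hB.
by rewrite dagger_mul mulmxA -(mulmxA A) hB mulmx1 hA.
Qed.

Lemma perm_mxE n (s : {perm 'I_n}) x y : (perm_mx s : 'M[C]_n) x y = (s x == y)%:R.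
Proof. by rewrite !mxE. Qed.

Lemma perm_mx_unitary n (s : {perm 'I_n}) : unitary (perm_mx s : 'M[C]_n).
Proof.
rewrite /unitary; have -> : dagger (perm_mx s : 'M[C]_n) = (perm_mx s)^T.
  by apply/matrixP => i j; rewrite daggerE [RHS]mxE !perm_mxE conjC_nat.
by rewrite tr_perm_mx -perm_mxM mulgV perm_mx1.
Qed.

Lemma mulmx_unit_rowE n (G N : 'M[C]_n) f r t :
  (forall u, G r u = (u == f)%:R) -> (G *m N) r t = N f t.
Proof.
move=> Gr; rewrite mxE (bigD1 f) //= Gr eqxx mul1r big1 ?addr0 // => u /negbTE nf.
by rewrite Gr nf mul0r.
Qed.

Lemma mulmx_unit_colE n (G N : 'M[C]_n) h r t :
  (forall v, G v t = (v == h)%:R) -> (N *m G) r t = N r h.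
Proof.
move=> Gt; rewrite mxE (bigD1 h) //= Gt eqxx mulr1 big1 ?addr0 // => u /negbTE nh.
by rewrite Gt nh mulr0.
Qed.

End Unitary.

Section Embed.
Variables (C : numClosedFieldType) (w k : nat) (p : 'I_k -> 'I_w).

Lemma embedE (V : 'M[C]_(2 ^ k)) r t :
  embed p V r t = if agree_off p r t then V (read_wires p r) (read_wires p t) else 0.
Proof.
rewrite /agree_off mxE; case: ifP => // _.
rewrite (big_pred1 (read_wires p r)) => [|x]; last by rewrite /= read_wiresP.
by rewrite (big_pred1 (read_wires p t)) => [|x]; last by rewrite /= read_wiresP.
Qed.

Hypothesis p_inj : injective p.

Lemma embed_unitary (V : 'M[C]_(2 ^ k)) : unitary V -> unitary (embed p V).
Proof.
move=> /eqP unitV; apply/eqP/matrixP => r t; rewrite !mxE.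
under eq_bigr => u _ do rewrite daggerE !embedE.
case: (boolP (agree_off p r t)) => agree_rt; last first.
  rewrite big1 => [|u _]; first by case: eqP => // e; rewrite e agree_off_refl in agree_rt.
  case: ifP => agree_ru; last by rewrite mul0r.
  case: ifP => agree_tu; last by rewrite rmorph0 mulr0.
  by move: agree_rt; rewrite (agree_off_trans agree_ru) // agree_offC.
have -> : (r == t) = (read_wires p r == read_wires p t).
  by apply/eqP/eqP => [->|/(agree_off_read_inj agree_rt)].
have := congr1 (fun M : 'M[C]_(2 ^ k) => M (read_wires p r) (read_wires p t)) unitV.
rewrite /= [RHS]mxE => <-; rewrite mxE -(sum_agree_off p_inj r).
apply: eq_bigr => u _; rewrite daggerE.
case: ifP => agree_ru; last by rewrite mul0r.
by rewrite (agree_off_trans _ agree_ru) // agree_offC.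
Qed.

Lemma embed_perm_mx_row (s : {perm 'I_(2 ^ k)}) r t :
  embed p (perm_mx s : 'M[C]_(2 ^ k)) r t
  = (t == write_wires p r (s (read_wires p r)))%:R.
Proof. by rewrite embedE perm_mxE -(write_wiresP p_inj) eq_sym; case: agree_off. Qed.

Lemma embed_perm_mx_col (s : {perm 'I_(2 ^ k)}) r t :
  embed p (perm_mx s : 'M[C]_(2 ^ k)) r t
  = (r == write_wires p t ((s^-1)%g (read_wires p t)))%:R.
Proof.
rewrite embedE perm_mxE -(write_wiresP p_inj) agree_offC (canF_eq (permK s)).
by case: agree_off.
Qed.

End Embed.

Section OracleCircuit.
Variables (C : numClosedFieldType) (w m : nat) (U : 'M[C]_(2 ^ m)).

Lemma foldl_ostep_mx (q : ocircuit C w m) (M0 : 'M[C]_(2 ^ w)) :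
  foldl (fun M st => ostep_mx U st *m M) M0 q = ocircuit_mx U q *m M0.
Proof.
rewrite /ocircuit_mx; elim: q M0 => [|st q IH] M0 /=; first by rewrite mul1mx.
by rewrite IH [in RHS]IH mulmx1 mulmxA.
Qed.

Lemma ocircuit_mx_cons (st : ostep C w m) (q : ocircuit C w m) :
  ocircuit_mx U (st :: q) = ocircuit_mx U q *m ostep_mx U st.
Proof. by rewrite {1}/ocircuit_mx /= mulmx1 foldl_ostep_mx. Qed.

Lemma ocircuit_mx_cat (q1 q2 : ocircuit C w m) :
  ocircuit_mx U (q1 ++ q2) = ocircuit_mx U q2 *m ocircuit_mx U q1.
Proof. by rewrite {1}/ocircuit_mx foldl_cat foldl_ostep_mx. Qed.

End OracleCircuit.

(* |b0 b1> |-> |b0, b1 (+) c (+) (d && b0)>: an X^c on the target, followed by a CNOT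
   from b0 when [d] holds. *)
Definition cx_bits (c d : bool) (x : 'I_(2 ^ 2)) : 'I_(2 ^ 2) :=
  ord_of_bits 2 (fun m => if m == 0%N then bitn 0 x else bitn 1 x (+) c (+) (d && bitn 0 x)).

Lemma cx_bitsK c d : involutive (cx_bits c d).
Proof.
move=> x; apply: ord_bitn_inj => -[|[|//]] _; rewrite !bitn_ord_of_bits //=.
by case: (bitn 1 x); case: c; case: d; case: (bitn 0 x).
Qed.

Definition cx_perm c d : {perm 'I_(2 ^ 2)} := perm (can_inj (cx_bitsK c d)).

Lemma cx_permV c d : (cx_perm c d)^-1%g = cx_perm c d.
Proof.
by apply/permP => x; apply: (@perm_inj _ (cx_perm c d)); rewrite permKV !permE cx_bitsK.
Qed.

Section SelectCircuit.
Variables (C : numClosedFieldType) (s a w : nat).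
Hypothesis wires_ok : (s + (a + s) <= w)%N.

(* Wires [0, s) hold the system register of the new encoding; the oracle acts on
   wires [s, s + (a + s)), so its own system register occupies [s, 2s). *)

Lemma ctrl_wire_lt (i : 'I_s) : (i < w)%N. Proof. have := ltn_ord i; lia. Qed.
Lemma target_wire_lt (i : 'I_s) : (s + i < w)%N. Proof. have := ltn_ord i; lia. Qed.
Lemma oracle_wire_lt (l : 'I_(a + s)) : (s + l < w)%N. Proof. have := ltn_ord l; lia. Qed.

Definition cx_wires (i : 'I_s) (l : 'I_2) : 'I_w :=
  if val l == 0%N then Ordinal (ctrl_wire_lt i) else Ordinal (target_wire_lt i).
Definition oracle_wires (l : 'I_(a + s)) : 'I_w := Ordinal (oracle_wire_lt l).

Lemma cx_wires_inj i : injective (cx_wires i).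
Proof.
move=> [[|[|?]] ?] [[|[|?]] ?] //= /(congr1 val) /= e; apply: val_inj => /=.
all: have := ltn_ord i; lia.
Qed.

Lemma oracle_wires_inj : injective oracle_wires.
Proof. by move=> l1 l2 /(congr1 val) /= /addnI /val_inj. Qed.

Lemma notin_oracle_wires (m : 'I_w) :
  m \notin codom oracle_wires -> ((m < s) || (s + (a + s) <= m))%N.
Proof.
move=> off; case: (ltnP m s) => //= ge_s; rewrite leqNgt; apply/negP => lt_as.
have lt_l : (m - s < a + s)%N by lia.
by move: off; rewrite (_ : m = oracle_wires (Ordinal lt_l)) ?codom_f //; apply: val_inj => /=; lia.
Qed.

Definition cx_gate i c d : gate C w := @Gate C w 2 (cx_wires i) (perm_mx (cx_perm c d)).
Definition cx_map i c d (r : 'I_(2 ^ w)) :=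
  write_wires (cx_wires i) r (cx_perm c d (read_wires (cx_wires i) r)).

Lemma cx_gate_row i c d r u : gate_mx (cx_gate i c d) r u = (u == cx_map i c d r)%:R.
Proof. exact/embed_perm_mx_row/cx_wires_inj. Qed.

Lemma cx_gate_col i c d v t : gate_mx (cx_gate i c d) v t = (v == cx_map i c d t)%:R.
Proof. by rewrite /gate_mx embed_perm_mx_col ?cx_permV //; exact: cx_wires_inj. Qed.

Lemma bitn_cx_map i c d r m : (m < w)%N ->
  bitn m (cx_map i c d r) = if m == (s + i)%N then bitn (s + i) r (+) c (+) (d && bitn i r)
                            else bitn m r.
Proof.
move=> lt_mw; have -> : m = Ordinal lt_mw by [].
case: (boolP (Ordinal lt_mw \in codom (cx_wires i))) => [/codomP [l ->]|off].
  rewrite /cx_map bitn_write_wires; last exact: cx_wires_inj.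
  rewrite permE; case: l => [[|[|//]] lt_l2]; rewrite bitn_ord_of_bits //=.
    rewrite (bitn_read_wires _ (Ordinal lt_l2)) /=.
    by case: eqP => // e; have := ltn_ord i; lia.
  by rewrite eqxx (bitn_read_wires _ (Ordinal lt_l2)) (bitn_read_wires _ (@Ordinal 2 0 isT)).
rewrite /cx_map bitn_write_wires_off //; case: eqP => //= e; move: off.
by rewrite (_ : Ordinal lt_mw = cx_wires i (@Ordinal 2 1 isT)) ?codom_f //; apply: val_inj.
Qed.

Lemma bitn_cx_map_ctrl (i i' : 'I_s) c d r : bitn i' (cx_map i c d r) = bitn i' r.
Proof. by rewrite bitn_cx_map ?ctrl_wire_lt //; case: eqP => // e; have := ltn_ord i'; lia. Qed.

Definition cx_step (cf : 'I_s -> bool) d i : ostep C w (a + s) :=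
  OLayer _ [:: cx_gate i (cf i) d].
Definition cx_steps cf d (l : seq 'I_s) := map (cx_step cf d) l.

Fixpoint cx_row cf d (l : seq 'I_s) r :=
  if l is i :: l' then cx_map i (cf i) d (cx_row cf d l' r) else r.
Fixpoint cx_col cf d (l : seq 'I_s) t :=
  if l is i :: l' then cx_col cf d l' (cx_map i (cf i) d t) else t.

Section Steps.
Variable U : 'M[C]_(2 ^ (a + s)).

Lemma cx_step_mx cf d i : ostep_mx U (cx_step cf d i) = gate_mx (cx_gate i (cf i) d).
Proof. exact: mulmx1. Qed.

Lemma mul_cx_steps_mxE cf d l (N : 'M[C]_(2 ^ w)) r t :
  (ocircuit_mx U (cx_steps cf d l) *m N) r t = N (cx_row cf d l r) t.
Proof.
elim: l N r t => [|i l IH] N r t /=; first by rewrite mul1mx.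
rewrite ocircuit_mx_cons cx_step_mx -mulmxA IH.
by apply: mulmx_unit_rowE => u; rewrite cx_gate_row.
Qed.

Lemma mulmx_cx_stepsE cf d l (N : 'M[C]_(2 ^ w)) r t :
  (N *m ocircuit_mx U (cx_steps cf d l)) r t = N r (cx_col cf d l t).
Proof.
elim: l N r t => [|i l IH] N r t /=; first by rewrite mulmx1.
rewrite ocircuit_mx_cons cx_step_mx mulmxA.
by rewrite (@mulmx_unit_colE _ _ _ _ (cx_map i (cf i) d t)) // => v; rewrite cx_gate_col.
Qed.

Lemma cx_steps_unitary cf d l : unitary (ocircuit_mx U (cx_steps cf d l)).
Proof.
elim: l => [|i l IH]; first exact: unitary1.
rewrite ocircuit_mx_cons cx_step_mx; apply: unitary_mul => //.
exact/embed_unitary/perm_mx_unitary/cx_wires_inj.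
Qed.

End Steps.

Lemma cx_steps_ok cf d l : all (@ostep_ok C w (a + s)) (cx_steps cf d l).
Proof.
elim: l => [|i l IH] //=; rewrite IH andbT /layer_ok /= andbT cats0.
rewrite /gate_ok /= perm_mx_unitary /gate_wires /=.
by rewrite map_inj_uniq ?enum_uniq //; exact: cx_wires_inj.
Qed.

Lemma cx_steps_ncalls cf d l : ncalls (cx_steps cf d l) = 0%N.
Proof. by elim: l. Qed.

Lemma cx_steps_odepth dU cf d l : odepth dU (cx_steps cf d l) = size l.
Proof. by elim: l => [|i l IH]; rewrite /odepth ?big_nil // big_cons -/(odepth _ _) IH. Qed.

Definition cx_mask cf d (l : seq 'I_s) (r : 'I_(2 ^ w)) m :=
  \big[addb/false]_(i <- l | m == (s + i)%N) (cf i (+) (d && bitn i r)).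

Lemma cx_mask_out cf d l r m : ((m < s) || (s + s <= m))%N -> cx_mask cf d l r m = false.
Proof.
move=> out; rewrite /cx_mask big1_seq // => i /andP [/eqP eq_m _].
by move: out; rewrite eq_m; have := ltn_ord i; lia.
Qed.

Lemma cx_mask_enum cf d r (i : 'I_s) :
  cx_mask cf d (enum 'I_s) r (s + i) = cf i (+) (d && bitn i r).
Proof. by rewrite /cx_mask big_enum_cond (big_pred1 i) // => i' /=; rewrite eqn_add2l eq_sym. Qed.

Lemma eq_cx_mask cf d l (r r' : 'I_(2 ^ w)) m :
  (forall i : 'I_s, bitn i r = bitn i r') -> cx_mask cf d l r m = cx_mask cf d l r' m.
Proof. by move=> eq_ctrl; apply: eq_bigr => i _; rewrite eq_ctrl. Qed.

Lemma bitn_cx_row_ctrl cf d l r (i : 'I_s) : bitn i (cx_row cf d l r) = bitn i r.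
Proof. by elim: l => [|i' l IH] //=; rewrite bitn_cx_map_ctrl. Qed.

Lemma bitn_cx_row cf d l r m : (m < w)%N ->
  bitn m (cx_row cf d l r) = bitn m r (+) cx_mask cf d l r m.
Proof.
move=> lt_mw; elim: l => [|i l IH] /=; first by rewrite /cx_mask big_nil addbF.
rewrite bitn_cx_map // bitn_cx_row_ctrl /cx_mask big_cons -/(cx_mask cf d l r m).
case: eqP => [eq_m|_] //; rewrite -eq_m IH.
by case: (bitn m r); case: (cx_mask cf d l r m); case: (cf i); case: (d && bitn i r).
Qed.

Lemma bitn_cx_col cf d l t m : (m < w)%N ->
  bitn m (cx_col cf d l t) = bitn m t (+) cx_mask cf d l t m.
Proof.
elim: l t => [|i l IH] t lt_mw /=; first by rewrite /cx_mask big_nil addbF.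
rewrite IH // bitn_cx_map // (@eq_cx_mask _ _ _ _ t) => [|i']; last exact: bitn_cx_map_ctrl.
rewrite /cx_mask big_cons -/(cx_mask cf d l t m).
case: eqP => [eq_m|_] //; rewrite -eq_m.
by case: (bitn m t); case: (cx_mask cf d l t m); case: (cf i); case: (d && bitn i t).
Qed.

Section Select.
Variables (j k : 'I_(2 ^ s)).

Definition select_circuit : ocircuit C w (a + s) :=
  cx_steps (fun i => bitn i j) false (enum 'I_s) ++
  @OCall C w (a + s) oracle_wires false ::
  cx_steps (fun i => bitn i j (+) bitn i k) true (enum 'I_s).

Local Notation row := (cx_row (fun i => bitn i j (+) bitn i k) true (enum 'I_s)).
Local Notation col := (cx_col (fun i => bitn i j) false (enum 'I_s)).

Lemma select_circuit_mxE U r t :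
  ocircuit_mx U select_circuit r t = embed oracle_wires U (row r) (col t).
Proof. by rewrite ocircuit_mx_cat ocircuit_mx_cons mulmx_cx_stepsE mul_cx_steps_mxE. Qed.

Lemma select_circuit_unitary U : unitary U -> unitary (ocircuit_mx U select_circuit).
Proof.
move=> unitU; rewrite ocircuit_mx_cat ocircuit_mx_cons.
apply: unitary_mul; last exact: cx_steps_unitary.
apply: unitary_mul; first exact: cx_steps_unitary.
exact: (embed_unitary oracle_wires_inj unitU).
Qed.

Lemma select_circuit_ok : ocircuit_ok select_circuit.
Proof.
rewrite /ocircuit_ok all_cat /= !cx_steps_ok andbT.
exact/injectiveP/oracle_wires_inj.
Qed.

Lemma select_circuit_ncalls : ncalls select_circuit = 1%N.
Proof. by rewrite /ncalls count_cat /= -!/(ncalls _) !cx_steps_ncalls. Qed.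

Lemma select_circuit_odepth dU : odepth dU select_circuit = (s + dU + s)%N.
Proof.
by rewrite /odepth big_cat big_cons -!/(odepth _ _) !cx_steps_odepth size_enum_ord /=; lia.
Qed.

Variable sys_le : (2 ^ s <= 2 ^ w)%N.
Local Notation sys r0 := (widen_ord sys_le r0).
Local Notation oracle_sys i := (widen_ord (exp2_le s a) i).

Lemma agree_off_select r0 t0 :
  agree_off oracle_wires (row (sys r0)) (col (sys t0)) = (r0 == t0).
Proof.
apply/forallP/eqP => [agree_rt|<- m]; last first.
  apply/implyP => /notin_oracle_wires off.
  by rewrite bitn_cx_row // bitn_cx_col // !cx_mask_out //; lia.
apply: ord_bitn_inj => i lt_is; have lt_iw : (i < w)%N by lia.
have off : Ordinal lt_iw \notin codom oracle_wires.
  by apply/codomP => -[l /(congr1 val) /=]; lia.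
move: (implyP (agree_rt (Ordinal lt_iw)) off) => /=.
by rewrite bitn_cx_row // bitn_cx_col // !cx_mask_out ?addbF; [move/eqP | lia | lia].
Qed.

Definition oracle_row (r0 : 'I_(2 ^ s)) : 'I_(2 ^ s) :=
  ord_of_bits s (fun l => bitn l j (+) bitn l k (+) bitn l r0).

Lemma oracle_row_eq r0 : (oracle_row r0 == j) = (r0 == k).
Proof.
apply/eqP/eqP => [eq_j|->]; apply: ord_bitn_inj => l lt_ls.
  move/(congr1 (fun z : 'I_(2 ^ s) => bitn l z)): eq_j; rewrite /= bitn_ord_of_bits //.
  by case: (bitn l j); case: (bitn l k); case: (bitn l r0).
by rewrite bitn_ord_of_bits //; case: (bitn l j); case: (bitn l k).
Qed.

Lemma read_select_col t0 : read_wires oracle_wires (col (sys t0)) = oracle_sys j.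
Proof.
apply: ord_bitn_inj => l lt_l.
rewrite (bitn_read_wires _ (Ordinal lt_l)) bitn_cx_col ?oracle_wire_lt //=.
rewrite (@bitn_small s t0) //=; last by lia.
case: (ltnP l s) => [lt_ls|ge_ls].
  by rewrite (cx_mask_enum _ _ _ (Ordinal lt_ls)) addbF.
by rewrite cx_mask_out ?(@bitn_small s j) //; lia.
Qed.

Lemma read_select_row r0 : read_wires oracle_wires (row (sys r0)) = oracle_sys (oracle_row r0).
Proof.
apply: ord_bitn_inj => l lt_l.
rewrite (bitn_read_wires _ (Ordinal lt_l)) bitn_cx_row ?oracle_wire_lt //=.
rewrite (@bitn_small s r0) //=; last by lia.
case: (ltnP l s) => [lt_ls|ge_ls].
  by rewrite (cx_mask_enum _ _ _ (Ordinal lt_ls)) bitn_ord_of_bits.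
by rewrite cx_mask_out ?(@bitn_small s (oracle_row r0)) //; lia.
Qed.

Lemma select_circuit_blockE (U : 'M[C]_(2 ^ (a + s))) (x : 'I_(2 ^ s) -> C) :
  (forall i i' : 'I_(2 ^ s), U (oracle_sys i) (oracle_sys i') = diagX x i i') ->
  forall r0 t0, ocircuit_mx U select_circuit (sys r0) (sys t0) = (x j *: delta_mx k k) r0 t0.
Proof.
move=> U_block r0 t0.
rewrite select_circuit_mxE embedE agree_off_select read_select_row read_select_col U_block.
rewrite !mxE; have [->|ne_rk] := eqVneq r0 k; last first.
  by rewrite oracle_row_eq (negbTE ne_rk) mulr0; case: ifP.
have /eqP -> : oracle_row k == j by rewrite oracle_row_eq.
by rewrite eqxx /= [t0 == k]eq_sym; case: eqP; rewrite ?mulr1 ?mulr0.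
Qed.

End Select.
End SelectCircuit.

Unset Implicit Arguments.

Theorem lemma2 (C : numClosedFieldType) (c : nat) :
  exists K : nat,
  forall (s a : nat) (j k : 'I_(2 ^ s)),
  exists Q : ocircuit C ((a + s + 3) + s) (a + s),
    ocircuit_ok Q /\ (ncalls Q <= 2)%N /\
    forall (x : 'I_(2 ^ s) -> C) (CU : circuit C (a + s)),
      (forall i, x i \is Num.real) ->
      (forall i, `|x i| < 1) ->
      circuit_ok CU ->
      (depth CU <= c * s + c)%N ->
      block_encoding (circuit_mx CU) (diagX x) ->
      block_encoding (ocircuit_mx (circuit_mx CU) Q) (x j *: delta_mx k k) /\
      (odepth (depth CU) Q <= K * s + K)%N.
Proof.
exists (c + 2)%N => s a j k.
have wires_ok : (s + (a + s) <= a + s + 3 + s)%N by lia.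
exists (select_circuit C wires_ok j k).
split; first exact: select_circuit_ok.
split; first by rewrite select_circuit_ncalls.
move=> x CU _ _ _ depth_CU [unitary_CU CU_block].
split; last by rewrite select_circuit_odepth; move: depth_CU; rewrite !mulnDl; lia.
split; first exact: select_circuit_unitary.
exact: select_circuit_blockE.
Qed.
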